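(* Let $A\in\mathbb{R}^{n\times m}$, let $b\in\mathbb{R}^n$ be a nonzero vector in the span of the columns of $A$, and let $c, c'\in\mathbb{R}^m$ have strictly positive entries. For positive $s\in\mathbb{R}^m$ let $\mathcal{E}_s(b) = \min_{y\in\mathbb{R}^m:\, A y = b} \sum_{i=1}^m s_i y_i^2$, and write $1/c$ for the vector $(1/c_i)_i$. Let $\phi = (A\,\mathbf{D}(c)A^\top)^+ b$. Then \[ \frac{1}{\mathcal{E}_{1/c'}(b)} \geq \frac{1}{\mathcal{E}_{1/c}(b)} + \frac{1}{\mathcal{E}_{1/c}(b)^2} \cdot \sum_{i=1}^m c_i\, (A^\top \phi)_i^2 \left(1-\frac{c_i}{c'_i}\right). \]
   Context: For a vector $c$, $\mathbf{D}(c)$ is the diagonal matrix with diagonal $c$; $L^+$ denotes the Moore–Penrose pseudoinverse of a symmetric matrix $L$. *)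

From HB Require Import structures.
From mathcomp Require Import all_boot all_order all_algebra.
From mathcomp Require Import boolp classical_sets reals.
Set Implicit Arguments. Unset Strict Implicit. Unset Printing Implicit Defensive.
Import Order.TTheory GRing.Theory Num.Theory.
Local Open Scope ring_scope.
Local Open Scope classical_set_scope.

Definition penrose (R : realType) (n : nat) (L X : 'M[R]_n) : Prop :=
  [/\ L *m X *m L = L, X *m L *m X = X,
      (L *m X)^T = L *m X & (X *m L)^T = X *m L].

(* Moore-Penrose pseudoinverse L^+ (the unique matrix satisfying the Penrose
   conditions; chosen via xget, which picks it since it exists). *)
Definition mp_pinv (R : realType) (n : nat) (L : 'M[R]_n) : 'M[R]_n :=
  xget 0 [set X | penrose L X].

Definition Dg (R : realType) (m : nat) (c : 'cV[R]_m) : 'M[R]_m := diag_mx c^T.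

Definition vinv (R : realType) (m : nat) (c : 'cV[R]_m) : 'cV[R]_m :=
  \col_i (c i 0)^-1.

(* E_s(b) = min_{y : A y = b} sum_i s_i y_i^2 (taken as the infimum, which is
   attained when b is in the column span of A and s > 0). *)
Definition energy (R : realType) (n m : nat) (A : 'M[R]_(n, m))
    (s : 'cV[R]_m) (b : 'cV[R]_n) : R :=
  inf [set (\sum_(i < m) s i 0 * (y i 0) ^+ 2) | y in [set y : 'cV[R]_m | A *m y = b]].

(* Put [L = A D(c) A^T] and [g = A^T L^+ b].  Since [L L^+] fixes the range
   of [A], the flow [y = D(c) g] is feasible, [A y = b].  Weak duality,
   [2 <w, b> - sum_i c_i (A^T w)_i^2 <= E_{1/c}(b)] for every [w], gives at
   [w = L^+ b] the bound [G := sum_i c_i g_i^2 <= E_{1/c}(b)], while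
   [E_{1/c'}(b) <= H := sum_i y_i^2 / c'_i].  The sum in the statement is
   [G - H <= E_{1/c}(b) - E_{1/c'}(b)], and the claim is the tangent-line
   inequality for the convex function [1/x] at [E_{1/c}(b)]. *)
From HB Require Import structures.
From mathcomp Require Import all_boot all_order all_algebra.
From mathcomp Require Import boolp classical_sets reals.
From mathcomp Require Import ring lra.
Import Order.TTheory GRing.Theory Num.Theory.
Set Implicit Arguments. Unset Strict Implicit.
Local Open Scope ring_scope.

Lemma inv_tangent_le (F : realFieldType) (a a' x : F) :
  0 < a -> 0 < a' -> x <= a - a' -> 1 / a + 1 / a ^+ 2 * x <= 1 / a'.
Proof.
move=> a0 a'0 xle.
have step : 1 / a ^+ 2 * x <= 1 / a ^+ 2 * (a - a').
  by rewrite ler_pM2l // divr_gt0 // exprn_gt0.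
apply: le_trans (lerD (lexx _) step) _; rewrite -subr_ge0.
have -> : 1 / a' - (1 / a + 1 / a ^+ 2 * (a - a')) = (a - a') ^+ 2 / (a' * a ^+ 2).
  by field; rewrite !gt_eqF.
by rewrite divr_ge0 ?sqr_ge0 // ltW // mulr_gt0 // exprn_gt0.
Qed.

Section WeightedEnergy.
Variable R : realType.

Lemma psum_wsqr_eq0 (I : finType) (d x : I -> R) :
  (forall i, 0 < d i) -> \sum_i d i * x i ^+ 2 = 0 -> forall i, x i = 0.
Proof.
move=> d0 sum0 i.
have /eqP := psumr_eq0P (fun k _ => mulr_ge0 (ltW (d0 k)) (sqr_ge0 (x k))) sum0 (i := i) isT.
by rewrite mulf_eq0 gt_eqF //= sqrf_eq0 => /eqP.
Qed.

Lemma weighted_gram_eq0 r m (M : 'M[R]_(r, m)) (d : 'cV[R]_m) :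
  (forall i, 0 < d i 0) -> M *m Dg d *m M^T = 0 -> M = 0.
Proof.
move=> d0 gram0; apply/matrixP => j k; rewrite mxE.
apply: (psum_wsqr_eq0 (d := fun i => d i 0) d0).
transitivity ((M *m Dg d *m M^T) j j); last by rewrite gram0 mxE.
by rewrite mxE; apply: eq_bigr => i _; rewrite /Dg mul_mx_diag !mxE; ring.
Qed.

Lemma gram_eq0 r m (M : 'M[R]_(r, m)) : M *m M^T = 0 -> M = 0.
Proof.
move=> gram0; apply: (@weighted_gram_eq0 _ _ M (const_mx 1)) => [i|].
  by rewrite mxE ltr01.
by rewrite /Dg trmx_const diag_const_mx mulmx1.
Qed.

Lemma row_free_gram_unit r k (M : 'M[R]_(r, k)) : row_free M -> M *m M^T \in unitmx.
Proof.
move=> freeM; rewrite -row_free_unit -kermx_eq0.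
apply/eqP/row_matrixP => i; rewrite row0.
set u := row i _.
have u_ker : u *m (M *m M^T) = 0 by apply/sub_kermxP; exact: row_sub.
have uM0 : u *m M = 0.
  by apply: gram_eq0; rewrite trmx_mul mulmxA -(mulmxA u) u_ker mul0mx.
by apply: (row_free_inj freeM); rewrite /= uM0 mul0mx.
Qed.

Lemma penrose_full_rank_factor n r (F : 'M[R]_(n, r)) (G : 'M[R]_(r, n)) :
  F^T *m F \in unitmx -> G *m G^T \in unitmx ->
  penrose (F *m G) (G^T *m invmx (G *m G^T) *m invmx (F^T *m F) *m F^T).
Proof.
move=> unitF unitG.
set P := invmx (F^T *m F); set Q := invmx (G *m G^T).
have QK k (Y : 'M[R]_(k, r)) : Y *m G *m G^T *m Q = Y.
  by rewrite -!mulmxA (mulmxA G) mulmxV // mulmx1.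
have PK k (Y : 'M[R]_(k, r)) : Y *m P *m F^T *m F = Y.
  by rewrite -!mulmxA mulVmx // mulmx1.
have PT : P^T = P by rewrite /P trmx_inv trmx_mul trmxK.
have QT : Q^T = Q by rewrite /Q trmx_inv trmx_mul trmxK.
split.
- by rewrite !mulmxA QK PK.
- by rewrite !mulmxA PK QK.
- by rewrite !mulmxA QK !trmx_mul trmxK PT mulmxA.
- by rewrite !mulmxA PK !trmx_mul trmxK QT mulmxA.
Qed.

Lemma mp_pinvP n (L : 'M[R]_n) : penrose L (mp_pinv L).
Proof.
have [X LX] : exists X, penrose L X.
  rewrite -(mulmx_base L); eexists; apply: penrose_full_rank_factor.
  - rewrite -[X in _ *m X]trmxK; apply: row_free_gram_unit.
    by rewrite /row_free mxrank_tr; exact: col_base_full.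
  - by apply: row_free_gram_unit; exact: row_base_free.
by apply: (xgetPex 0 (P := [set X | penrose L X])); exists X.
Qed.

(* Range argument: [N := (1 - L X) A] has [N D(d) N^T = (1 - L X) L (..)^T = 0]. *)
Lemma penrose_weighted_gram_range n m (A : 'M[R]_(n, m)) (d : 'cV[R]_m)
    (X : 'M[R]_n) :
  (forall i, 0 < d i 0) ->
  let L := A *m Dg d *m A^T in L *m X *m L = L -> L *m X *m A = A.
Proof.
move=> d0 L LXL; apply/esym/subr0_eq.
have LXA0 : (1%:M - L *m X) *m A = 0.
  apply: weighted_gram_eq0 d0 _.
  have DL : (1%:M - L *m X) *m A *m Dg d *m A^T = (1%:M - L *m X) *m L.
    by rewrite /L !mulmxA.
  by rewrite trmx_mul !mulmxA DL mulmxBl mul1mx LXL subrr !mul0mx.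
by move: LXA0; rewrite mulmxBl mul1mx.
Qed.

Lemma dot_trmx n m (A : 'M[R]_(n, m)) (w : 'cV[R]_n) (y : 'cV[R]_m) :
  \sum_i (A^T *m w) i 0 * y i 0 = \sum_k w k 0 * (A *m y) k 0.
Proof.
have dotE k (u v : 'cV[R]_k) : \sum_i u i 0 * v i 0 = (u^T *m v) 0 0.
  by rewrite mxE; apply: eq_bigr => i _; rewrite mxE.
by rewrite !dotE trmx_mul trmxK mulmxA.
Qed.

(* Termwise, [y^2 / d - (2 u y - d u^2) = (y - d u)^2 / d]. *)
Lemma dual_quad_le m (d u y : 'cV[R]_m) : (forall i, 0 < d i 0) ->
  2 * (\sum_i u i 0 * y i 0) - \sum_i d i 0 * u i 0 ^+ 2
  <= \sum_i vinv d i 0 * y i 0 ^+ 2.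
Proof.
move=> d0; rewrite mulr_sumr -sumrB; apply: ler_sum => i _.
rewrite mxE -subr_ge0.
have -> : (d i 0)^-1 * y i 0 ^+ 2 - (2 * (u i 0 * y i 0) - d i 0 * u i 0 ^+ 2)
   = (d i 0)^-1 * (y i 0 - d i 0 * u i 0) ^+ 2.
  by field; rewrite gt_eqF.
by rewrite mulr_ge0 ?sqr_ge0 // invr_ge0 ltW.
Qed.

Lemma energy_le n m (A : 'M[R]_(n, m)) (d y : 'cV[R]_m) (b : 'cV[R]_n) :
  (forall i, 0 < d i 0) -> A *m y = b ->
  energy A (vinv d) b <= \sum_i vinv d i 0 * y i 0 ^+ 2.
Proof.
move=> d0 Ay; apply: ge_inf; last by exists y.
exists 0 => _ [z _ <-]; apply: sumr_ge0 => i _.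
by rewrite mxE mulr_ge0 ?sqr_ge0 // invr_ge0 ltW.
Qed.

Lemma energy_ge n m (A : 'M[R]_(n, m)) (d : 'cV[R]_m) (b : 'cV[R]_n) (v : R) :
  (exists y, A *m y = b) ->
  (forall y, A *m y = b -> v <= \sum_i vinv d i 0 * y i 0 ^+ 2) ->
  v <= energy A (vinv d) b.
Proof.
move=> [y0 Ay0] lb; apply: lb_le_inf; first by exists (\sum_i vinv d i 0 * y0 i 0 ^+ 2), y0.
by move=> _ [y Ay <-]; exact: lb.
Qed.

Lemma energy_ge_dual n m (A : 'M[R]_(n, m)) (d : 'cV[R]_m) (b w : 'cV[R]_n) :
  (forall i, 0 < d i 0) -> (exists y, A *m y = b) ->
  2 * (\sum_k w k 0 * b k 0) - \sum_i d i 0 * (A^T *m w) i 0 ^+ 2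
  <= energy A (vinv d) b.
Proof.
move=> d0 feas; apply: energy_ge => // y Ay.
by apply: le_trans (dual_quad_le (A^T *m w) y d0); rewrite dot_trmx Ay.
Qed.

(* The dual witness is [w = t b] with [t = B / (K + B)], so that [t K <= B]. *)
Lemma energy_gt0 n m (A : 'M[R]_(n, m)) (d : 'cV[R]_m) (b : 'cV[R]_n) :
  b != 0 -> (exists y, A *m y = b) -> (forall i, 0 < d i 0) ->
  0 < energy A (vinv d) b.
Proof.
move=> b_neq0 feas d0.
set B := \sum_k b k 0 * b k 0.
set K := \sum_i d i 0 * (A^T *m b) i 0 ^+ 2.
have B0 : 0 < B.
  rewrite lt0r sumr_ge0 ?andbT => [|k _]; last by rewrite -expr2 sqr_ge0.
  apply: contra b_neq0 => /eqP B_eq0; apply/eqP/matrixP => k j; rewrite ord1 mxE.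
  apply: (psum_wsqr_eq0 (d := fun _ => 1) (x := fun i => b i 0) (fun _ => ltr01)).
  by transitivity B => //; apply: eq_bigr => i _; rewrite mul1r expr2.
have K0 : 0 <= K by apply: sumr_ge0 => i _; rewrite mulr_ge0 ?sqr_ge0 ?ltW.
set t := B / (K + B).
have t0 : 0 < t by rewrite divr_gt0 // ltr_wpDl.
have tK : t * (t * K) <= t * B.
  rewrite ler_pM2l // /t mulrAC ler_pdivrMr ?ltr_wpDl // mulrDr lerDl.
  by rewrite mulr_ge0 ?ltW.
apply: lt_le_trans (energy_ge_dual (t *: b) d0 feas).
have -> : \sum_k (t *: b) k 0 * b k 0 = t * B.
  by rewrite mulr_sumr; apply: eq_bigr => k _; rewrite mxE mulrA.
have -> : \sum_i d i 0 * (A^T *m (t *: b)) i 0 ^+ 2 = t * (t * K).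
  by rewrite !mulr_sumr; apply: eq_bigr => i _; rewrite -scalemxAr mxE; ring.
have : 0 < t * B by rewrite mulr_gt0.
lra.
Qed.

End WeightedEnergy.

Theorem lemma4p4 (R : realType) (n m : nat) (A : 'M[R]_(n, m)) (b : 'cV[R]_n)
    (c c' : 'cV[R]_m)
    (hb0 : b != 0) (hbspan : exists y : 'cV[R]_m, A *m y = b)
    (hc : forall i, 0 < c i 0) (hc' : forall i, 0 < c' i 0) :
  let phi := mp_pinv (A *m Dg c *m A^T) *m b in
  let Ec := energy A (vinv c) b in
  let Ec' := energy A (vinv c') b in
  1 / Ec + 1 / Ec ^+ 2 *
    (\sum_(i < m) c i 0 * ((A^T *m phi) i 0) ^+ 2 * (1 - c i 0 / c' i 0))
  <= 1 / Ec'.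
Proof.
cbv zeta; have [y0 Ay0] := hbspan.
set phi := mp_pinv _ *m b; set Ec := energy A (vinv c) b; set Ec' := energy A _ b.
have [LXL _ _ _] := mp_pinvP (A *m Dg c *m A^T).
set g := A^T *m phi; set y := Dg c *m g.
have Ay : A *m y = b.
  have LXA := penrose_weighted_gram_range hc LXL.
  by rewrite /y /g /phi !mulmxA -Ay0 !mulmxA LXA.
have yE i : y i 0 = c i 0 * g i 0 by rewrite /y /Dg mul_diag_mx !mxE.
have phibE : \sum_k phi k 0 * b k 0 = \sum_i c i 0 * g i 0 ^+ 2.
  by rewrite -Ay -dot_trmx; apply: eq_bigr => i _; rewrite yE; ring.
have EcG : \sum_i c i 0 * g i 0 ^+ 2 <= Ec.
  by apply: le_trans (energy_ge_dual phi hc hbspan); rewrite phibE; lra.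
have Ec'H : Ec' <= \sum_i vinv c' i 0 * y i 0 ^+ 2 by exact: energy_le.
apply: inv_tangent_le; rewrite ?energy_gt0 //.
rewrite (eq_bigr (fun i => c i 0 * g i 0 ^+ 2 - vinv c' i 0 * y i 0 ^+ 2)).
  by rewrite sumrB; lra.
by move=> i _; rewrite yE [vinv c' i 0]mxE; field; rewrite gt_eqF.
Qed.
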